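(* If a function $f$ is computable by an $M$-memory $(T(n),IO(n))$-time TM-TLM-BT with block size $B$, then there is an $M$-memory $(T(n)+B\cdot IO(n),\,B\cdot IO(n))$-time TM-TLM that computes $f$.
   Context: A Turing machine with two-level memory (TM-TLM) with main memory size $M$ has three tapes: a main memory tape of $M$ cells, an unbounded external memory tape, and an address tape for the external memory. It has a finite state set, alphabets $\Sigma\subseteq\Gamma$ with a blank, an accepting state, and a transition function $\delta: Q\times\Gamma\to Q\times\Gamma\times\{L,S,R\}$ acting on the main memory tape. There are special read and write states: on entering a read state the machine writes an address $addr$ on the address tape and the main memory cell under the head receives the content of external cell $addr$; on entering a write state, external cell $addr$ receives the content of the main memory cell under the head. Each Read/Write is one IO operation of unit cost, after which the head may move L, R or stay. Time = number of transitions other than Read/Write; IO time = number of Read/Write operations. An $M$-memory $(T(n),IO(n))$-time machine has main memory size $M$, time complexity $O(T(n))$ and IO complexity $O(IO(n))$. A TM-TLM-BT (TM-TLM with block transfer) with block size $B$ is defined like a TM-TLM except that $B$ divides $M$, both the main memory and the external memory are partitioned into aligned blocks of $B$ consecutive cells, and each IO operation transfers an entire block: even when a single cell is requested, all $B$ cells of the block containing it are transferred (between the main memory block and the external block), and this counts as one IO operation. *)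

From mathcomp Require Import all_boot.

Set Implicit Arguments.
Unset Strict Implicit.
Unset Printing Implicit Defensive.

Inductive move := MoveL | MoveS | MoveR.

Inductive skind := Normal | ReadSt | WriteSt.

Inductive aop := AKeep | AZero | AInc | ADec | ADbl.

(* A machine (the same syntax is used for TM-TLM and TM-TLM-BT; only the
   semantics of an IO operation differs). *)
Record TLM (Sigma : finType) := {
  tQ : finType;
  tG : finType;
  tblank : tG;
  temb : Sigma -> tG;
  temb_inj : injective temb;
  temb_nblank : forall a, temb a <> tblank;
  tq0 : tQ;
  tqacc : tQ;
  tkind : tQ -> skind;
  (* transition function on the main memory tape; it also receives the
     test "address = 0" and acts on the address tape *)
  tdelta : tQ -> tG -> bool -> tQ * tG * move * aop;
  (* after a Read/Write in state q: next state and main-head move *)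
  tio : tQ -> tQ * move }.

Record config (Q G : Type) := Cfg {
  cst : Q;
  cmain : nat -> G;     (* main memory tape (only cells < M are used) *)
  chd : nat;
  cext : nat -> G;
  caddr : nat }.        (* content (address) of the address tape *)

Definition mv (M h : nat) (m : move) : nat :=
  match m with
  | MoveL => h.-1
  | MoveS => h
  | MoveR => if h.+1 < M then h.+1 else h
  end.

Definition aupd (a : nat) (o : aop) : nat :=
  match o with
  | AKeep => a | AZero => 0 | AInc => a.+1 | ADec => a.-1 | ADbl => a.*2
  end.

Section Sem.
Variable Sigma : finType.
Variable mach : TLM Sigma.
Local Notation Q := (tQ mach).
Local Notation G := (tG mach).
Local Notation cfg := (config Q G).

Definition cell_read (c : cfg) : nat -> G :=
  fun i => if i == chd c then cext c (caddr c) else cmain c i.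
Definition cell_write (c : cfg) : nat -> G :=
  fun j => if j == caddr c then cmain c (chd c) else cext c j.

Definition block_read (B : nat) (c : cfg) : nat -> G :=
  let h0 := chd c %/ B * B in
  let a0 := caddr c %/ B * B in
  fun i => if (h0 <= i) && (i < h0 + B) then cext c (a0 + (i - h0))
           else cmain c i.
Definition block_write (B : nat) (c : cfg) : nat -> G :=
  let h0 := chd c %/ B * B in
  let a0 := caddr c %/ B * B in
  fun j => if (a0 <= j) && (j < a0 + B) then cmain c (h0 + (j - a0))
           else cext c j.

(* One step, parameterised by the IO semantics.  Returns the new
   configuration, the time cost and the IO cost of the step. *)
Definition gstep (M : nat) (rd wr : cfg -> nat -> G) (c : cfg)
  : cfg * nat * nat :=
  match @tkind _ mach (cst c) with
  | Normal =>
      let: (q', g, m, o) := @tdelta _ mach (cst c) (cmain c (chd c)) (caddr c == 0) in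
      (Cfg q' (fun i => if i == chd c then g else cmain c i)
           (mv M (chd c) m) (cext c) (aupd (caddr c) o), 1, 0)
  | ReadSt =>
      let: (q', m) := @tio _ mach (cst c) in
      (Cfg q' (rd c) (mv M (chd c) m) (cext c) (caddr c), 0, 1)
  | WriteSt =>
      let: (q', m) := @tio _ mach (cst c) in
      (Cfg q' (cmain c) (mv M (chd c) m) (wr c) (caddr c), 0, 1)
  end.

Fixpoint grun (M : nat) (rd wr : cfg -> nat -> G) (n : nat) (c : cfg)
  : option (cfg * nat * nat) :=
  if cst c == @tqacc _ mach then Some (c, 0, 0) else
  match n with
  | 0 => None
  | n'.+1 =>
      let: (c', t, i) := gstep M rd wr c in
      match grun M rd wr n' c' with
      | Some (cf, t', i') => Some (cf, t + t', i + i')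
      | None => None
      end
  end.

Definition init (w : seq Sigma) : cfg :=
  Cfg (@tq0 _ mach) (fun _ => tblank mach) 0
      (fun i => nth (tblank mach) (map (temb mach) w) i) 0.

(* output convention: f(w) in external cells 0..|f(w)|-1, followed by blank *)
Definition output_is (c : cfg) (y : seq Sigma) : Prop :=
  forall i, i <= size y -> cext c i = nth (tblank mach) (map (temb mach) y) i.

Definition computes_in (M : nat) (rd wr : cfg -> nat -> G)
  (f : seq Sigma -> seq Sigma) (T IO : nat -> nat) : Prop :=
  (forall w, exists n cf t io,
      grun M rd wr n (init w) = Some (cf, t, io) /\ output_is cf (f w)) /\
  (exists C N, forall w, N <= size w ->
      exists n cf t io, grun M rd wr n (init w) = Some (cf, t, io) /\
        t <= C * T (size w) /\ io <= C * IO (size w)).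

End Sem.

Definition TLM_computes (Sigma : finType) (M : nat) (mach : TLM Sigma)
  (f : seq Sigma -> seq Sigma) (T IO : nat -> nat) : Prop :=
  computes_in M (@cell_read Sigma mach) (@cell_write Sigma mach) f T IO.

Definition TLMBT_computes (Sigma : finType) (M B : nat) (mach : TLM Sigma)
  (f : seq Sigma -> seq Sigma) (T IO : nat -> nat) : Prop :=
  computes_in M (@block_read Sigma mach B) (@block_write Sigma mach B) f T IO.

(* A TM-TLM simulates a block transfer by B single-cell transfers. Its finite
   control records, besides the simulated state, the head position h < M and
   the address modulo B, both determined by the history of the simulated
   machine. At a block IO it moves the address down to the start of its block
   and the head to h - h mod B, transfers the B cells while advancing both,
   moves the address back and the head to its new simulated position. Since
   B divides M, the head's block lies inside main memory. Each block IO thus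
   costs B IO operations and at most 7B ordinary steps, and ordinary steps are
   simulated one for one, so a run of time t and IO time i becomes a run of
   time at most t + 7B i and IO time B i. *)

From HB Require Import structures.
From mathcomp Require Import all_boot zify.
From Stdlib Require Import FunctionalExtensionality.

Set Implicit Arguments.
Unset Strict Implicit.
Unset Printing Implicit Defensive.

Lemma mv_lt M h m : h < M -> mv M h m < M.
Proof. by case: m => /=; [lia | done | case: ifP]. Qed.

Lemma mv_near M h m : h.-1 <= mv M h m <= h.+1.
Proof. by case: m => /=; [lia | lia | case: ifP; lia]. Qed.

Section Executions.
Variables (Sigma : finType) (mach : TLM Sigma) (M : nat).
Variables rd wr : config (tQ mach) (tG mach) -> nat -> tG mach.
Local Notation cfg := (config (tQ mach) (tG mach)).
Local Notation step := (gstep M rd wr).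
Local Notation run := (grun M rd wr).

Inductive reach : cfg -> cfg -> nat -> nat -> Prop :=
| reach0 c : reach c c 0 0
| reachS c c1 d t i t' i' : cst c != tqacc mach -> step c = (c1, t, i) ->
    reach c1 d t' i' -> reach c d (t + t') (i + i').

Lemma reach_trans c d e t i t' i' :
  reach c d t i -> reach d e t' i' -> reach c e (t + t') (i + i').
Proof.
elim=> [//|{}c c1 {}d t1 i1 t2 i2 Hn Hs _ IH] He.
by rewrite -!addnA; apply: reachS Hn Hs _; apply: IH.
Qed.

Lemma reach_grun c d t i n cf t' i' :
  reach c d t i -> run n d = Some (cf, t', i') ->
  exists n', run n' c = Some (cf, t + t', i + i').
Proof.
elim=> [{}c|{}c c1 {}d t1 i1 t2 i2 Hn Hs _ IH] Hd; first by exists n.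
have [n' Hn'] := IH Hd; exists n'.+1 => /=.
by rewrite (negbTE Hn) Hs Hn' !addnA.
Qed.

Lemma reach_normal c q g m o d t i :
  cst c != tqacc mach -> tkind (cst c) = Normal ->
  tdelta (cst c) (cmain c (chd c)) (caddr c == 0) = (q, g, m, o) ->
  reach (Cfg q (fun x => if x == chd c then g else cmain c x) (mv M (chd c) m)
           (cext c) (aupd (caddr c) o)) d t i ->
  reach c d t.+1 i.
Proof.
by move=> Hn Hk Hd Hr; apply: (reachS (t := 1) (i := 0) Hn _ Hr); rewrite /gstep Hk Hd.
Qed.

Lemma reach_read c q m d t i :
  cst c != tqacc mach -> tkind (cst c) = ReadSt -> tio (cst c) = (q, m) ->
  reach (Cfg q (rd c) (mv M (chd c) m) (cext c) (caddr c)) d t i ->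
  reach c d t i.+1.
Proof.
by move=> Hn Hk Hd Hr; apply: (reachS (t := 0) (i := 1) Hn _ Hr); rewrite /gstep Hk Hd.
Qed.

Lemma reach_write c q m d t i :
  cst c != tqacc mach -> tkind (cst c) = WriteSt -> tio (cst c) = (q, m) ->
  reach (Cfg q (cmain c) (mv M (chd c) m) (wr c) (caddr c)) d t i ->
  reach c d t i.+1.
Proof.
by move=> Hn Hk Hd Hr; apply: (reachS (t := 0) (i := 1) Hn _ Hr); rewrite /gstep Hk Hd.
Qed.

Lemma gstep_head_lt c c1 t i : chd c < M -> step c = (c1, t, i) -> chd c1 < M.
Proof.
case: c => q main h ext a /= hM; rewrite /gstep /=.
case: (tkind q).
- by case: tdelta => [[[? ?] m] ?] [<- _ _]; apply: mv_lt.
- by case: (tio q) => [? m] [<- _ _]; apply: mv_lt.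
- by case: (tio q) => [? m] [<- _ _]; apply: mv_lt.
Qed.

End Executions.
Arguments reach {Sigma} mach M rd wr.

Section StepSimulation.
Variables (Sigma : finType) (A S : TLM Sigma) (MA MS : nat).
Local Notation cfgA := (config (tQ A) (tG A)).
Local Notation cfgS := (config (tQ S) (tG S)).
Variables (rdA wrA : cfgA -> nat -> tG A) (rdS wrS : cfgS -> nat -> tG S).
Variables (enc : cfgA -> cfgS) (inv : cfgA -> Prop) (K : nat).
Local Notation stepA := (gstep MA rdA wrA).
Local Notation runA := (grun MA rdA wrA).
Local Notation runS := (grun MS rdS wrS).

Hypothesis enc_acc : forall c, (cst (enc c) == tqacc S) = (cst c == tqacc A).
Hypothesis inv_step : forall c c1 t i, inv c -> stepA c = (c1, t, i) -> inv c1.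
Hypothesis step_sim : forall c c1 t i, inv c -> cst c != tqacc A ->
  stepA c = (c1, t, i) ->
  exists t' i', reach S MS rdS wrS (enc c) (enc c1) t' i' /\ t' <= t + K * i /\ i' <= K * i.

Lemma run_sim n c cf t i : inv c -> runA n c = Some (cf, t, i) ->
  exists n' t' i', runS n' (enc c) = Some (enc cf, t', i') /\
    t' <= t + K * i /\ i' <= K * i.
Proof.
have acc_run c' : cst c' == tqacc A -> runS 0 (enc c') = Some (enc c', 0, 0).
  by move=> Hc; rewrite /= enc_acc Hc.
elim: n c t i => [|n IH] c t i Hc /=; case: ifP => Ha //.
- by case=> <- <- <-; exists 0, 0, 0; rewrite acc_run.
- by case=> <- <- <-; exists 0, 0, 0; rewrite acc_run.
case Hs: (stepA c) => [[c1 t1] i1].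
case Hr: (runA n c1) => [[[cf' t2] i2]|] // [Ecf <- <-]; subst cf'.
have [n2 [t2' [i2' [Hr' [Ht2 Hi2]]]]] := IH _ _ _ (inv_step Hc Hs) Hr.
have [t1' [i1' [R [Ht1 Hi1]]]] := step_sim Hc (negbT Ha) Hs.
have [n' Hn'] := reach_grun R Hr'.
by exists n', (t1' + t2'), (i1' + i2'); rewrite Hn'; split => //; nia.
Qed.

End StepSimulation.

Definition copy_block (T : Type) (src dst : nat -> T) (s0 d0 k : nat) : nat -> T :=
  fun i => if (d0 <= i) && (i < d0 + k) then src (s0 + (i - d0)) else dst i.

Lemma copy_block0 (T : Type) (src dst : nat -> T) s0 d0 : copy_block src dst s0 d0 0 = dst.
Proof. by apply: functional_extensionality => i; rewrite /copy_block; case: ifP => //; lia. Qed.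

Lemma copy_blockS (T : Type) (src dst : nat -> T) s0 d0 k :
  copy_block src dst s0 d0 k.+1 =
  fun i => if i == d0 + k then src (s0 + k) else copy_block src dst s0 d0 k i.
Proof.
apply: functional_extensionality => i; rewrite /copy_block.
case: eqP => [->|ne]; first by rewrite leq_addr addnS ltnSn addKn.
by congr (if _ then _ else _); apply/idP/idP => /andP[H1 H2]; apply/andP; split => //; lia.
Qed.

(* Phases of a simulated block IO: move the address, then the head, back to
   the start of their blocks; transfer cell k and advance; restore the address;
   move the head to its target. *)
Inductive ctrl (n : nat) :=
  | Run
  | AddrBack of 'I_n | HeadBack of 'I_n | Transfer of 'I_n
  | Advance of 'I_n | AddrRestore of 'I_n | HeadTo of 'I_n.
Arguments Run {n}.

Definition ctrl_code n (c : ctrl n) : option ('I_n + 'I_n + 'I_n + 'I_n + 'I_n + 'I_n) :=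
  match c with
  | Run => None
  | AddrBack j => Some (inl (inl (inl (inl (inl j)))))
  | HeadBack j => Some (inl (inl (inl (inl (inr j)))))
  | Transfer j => Some (inl (inl (inl (inr j))))
  | Advance j => Some (inl (inl (inr j)))
  | AddrRestore j => Some (inl (inr j))
  | HeadTo j => Some (inr j)
  end.

Definition ctrl_decode n (x : option ('I_n + 'I_n + 'I_n + 'I_n + 'I_n + 'I_n)) : ctrl n :=
  match x with
  | None => Run
  | Some (inl (inl (inl (inl (inl j))))) => AddrBack j
  | Some (inl (inl (inl (inl (inr j))))) => HeadBack j
  | Some (inl (inl (inl (inr j)))) => Transfer j
  | Some (inl (inl (inr j))) => Advance j
  | Some (inl (inr j)) => AddrRestore j
  | Some (inr j) => HeadTo j
  end.

Lemma ctrl_codeK n : cancel (@ctrl_code n) (@ctrl_decode n). Proof. by case. Qed.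
HB.instance Definition _ n := Finite.copy (ctrl n) (can_type (@ctrl_codeK n)).

Section BlockSimulator.
Variables (Sigma : finType) (mach : TLM Sigma) (M' B' : nat).
Local Notation M := M'.+1.
Local Notation B := B'.+1.
Local Notation Q := (tQ mach).
Local Notation G := (tG mach).

Definition state : finType := (Q * 'I_M * 'I_M * ctrl M)%type.

(* The simulator has a single accepting state, so the bookkeeping is erased
   on acceptance. *)
Definition resume (q : Q) (h r : 'I_M) : state :=
  if q == tqacc mach then (q, ord0, ord0, Run) else (q, h, r, Run).

(* z is the test "address = 0", needed because decrementing 0 gives 0. *)
Definition residue_upd (r : nat) (o : aop) (z : bool) : nat :=
  match o with
  | AKeep => r
  | AZero => 0
  | AInc => r.+1 %% B
  | ADec => if z then 0 else (r + B') %% B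
  | ADbl => r.*2 %% B
  end.

Definition sim_delta (s : state) (g : G) (z : bool) : state * G * move * aop :=
  let: (q, h, r, c) := s in
  match c with
  | Run => match tkind q with
           | Normal => let: (q1, g1, m1, o) := tdelta q g z in
                       (resume q1 (inord (mv M h m1)) (inord (residue_upd r o z)), g1, m1, o)
           | _ => ((q, h, r, AddrBack r), g, MoveS, AKeep)
           end
  | AddrBack j =>
      if val j == 0 then ((q, h, r, HeadBack (inord (h %% B))), g, MoveS, AKeep)
      else ((q, h, r, AddrBack (inord j.-1)), g, MoveS, ADec)
  | HeadBack j =>
      if val j == 0 then ((q, h, r, Transfer ord0), g, MoveS, AKeep)
      else ((q, h, r, HeadBack (inord j.-1)), g, MoveL, AKeep)
  | Transfer _ => (s, g, MoveS, AKeep) (* unreachable: an IO state *)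
  | Advance k =>
      if val k == B' then ((q, h, r, AddrRestore (inord (B' - r))), g, MoveS, AKeep)
      else ((q, h, r, Transfer (inord k.+1)), g, MoveR, AInc)
  | AddrRestore j =>
      if val j == 0 then ((q, h, r, HeadTo (inord (h %/ B * B + B'))), g, MoveS, AKeep)
      else ((q, h, r, AddrRestore (inord j.-1)), g, MoveS, ADec)
  | HeadTo p =>
      let: (q', m) := tio q in
      if val p == mv M h m then (resume q' (inord (mv M h m)) r, g, MoveS, AKeep)
      else if val p < mv M h m then ((q, h, r, HeadTo (inord p.+1)), g, MoveR, AKeep)
      else ((q, h, r, HeadTo (inord p.-1)), g, MoveL, AKeep)
  end.

Definition sim_kind (s : state) : skind :=
  let: (q, _, _, c) := s in
  if c is Transfer _ then (if tkind q is WriteSt then WriteSt else ReadSt) else Normal.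

Definition sim_io (s : state) : state * move :=
  let: (q, h, r, c) := s in
  if c is Transfer k then ((q, h, r, Advance k), MoveS) else (s, MoveS).

Definition sim : TLM Sigma :=
  @Build_TLM Sigma state G (tblank mach) (temb mach) (@temb_inj _ mach)
    (@temb_nblank _ mach) (resume (tq0 mach) ord0 ord0) (tqacc mach, ord0, ord0, Run)
    sim_kind sim_delta sim_io.

Local Notation reachS := (reach sim M (@cell_read _ sim) (@cell_write _ sim)).

Lemma ctrl_nacc q h r (c : ctrl M) : c != Run -> ((q, h, r, c) : state) != tqacc sim.
Proof. by move=> Hc; apply/eqP => -[_ _ _ E]; rewrite E eqxx in Hc. Qed.

Lemma state_nacc q h r (c : ctrl M) : q != tqacc mach -> ((q, h, r, c) : state) != tqacc sim.
Proof. by move=> Hq; apply/eqP => -[E _ _ _]; rewrite E eqxx in Hq. Qed.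

Lemma reach_ctrl (s s' : state) main h ext a m o d t i :
  s != tqacc sim -> sim_kind s = Normal ->
  sim_delta s (main h) (a == 0) = (s', main h, m, o) ->
  reachS (Cfg s' main (mv M h m) ext (aupd a o)) d t i ->
  reachS (Cfg s main h ext a) d t.+1 i.
Proof.
move=> Hn Hk Hd Hr; apply: (reach_normal (mach := sim) (c := Cfg s main h ext a)) Hn Hk Hd _.
suff -> : (fun x => if x == h then main h else main x) = main by [].
by apply: functional_extensionality => x; case: eqP => [->|].
Qed.

Lemma addr_back q (hI rI : 'I_M) j main hd ext a : j < M -> j <= a ->
  reachS (Cfg (q, hI, rI, AddrBack (inord j)) main hd ext a)
         (Cfg (q, hI, rI, HeadBack (inord (hI %% B))) main hd ext (a - j)) j.+1 0.
Proof.
elim: j a => [|j IH] a hj ha;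
  (apply: reach_ctrl; [exact: ctrl_nacc | by [] | by rewrite /= inordK |]).
  by rewrite subn0; apply: reach0.
by rewrite /= subnS predn_sub; apply: IH; lia.
Qed.

Lemma head_back q (hI rI : 'I_M) j main hd ext a : j < M -> j <= hd ->
  reachS (Cfg (q, hI, rI, HeadBack (inord j)) main hd ext a)
         (Cfg (q, hI, rI, Transfer ord0) main (hd - j) ext a) j.+1 0.
Proof.
elim: j hd => [|j IH] hd hj hh;
  (apply: reach_ctrl; [exact: ctrl_nacc | by [] | by rewrite /= inordK |]).
  by rewrite subn0; apply: reach0.
by rewrite /= subnS predn_sub; apply: IH; lia.
Qed.

Lemma addr_restore q (hI rI : 'I_M) j main hd ext a : j < M -> j <= a ->
  reachS (Cfg (q, hI, rI, AddrRestore (inord j)) main hd ext a)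
         (Cfg (q, hI, rI, HeadTo (inord (hI %/ B * B + B'))) main hd ext (a - j)) j.+1 0.
Proof.
elim: j a => [|j IH] a hj ha;
  (apply: reach_ctrl; [exact: ctrl_nacc | by [] | by rewrite /= inordK |]).
  by rewrite subn0; apply: reach0.
by rewrite /= subnS predn_sub; apply: IH; lia.
Qed.

Lemma head_to q q' m (hI rI : 'I_M) main ext a p : tio q = (q', m) -> p < M ->
  let target := mv M hI m in
  reachS (Cfg (q, hI, rI, HeadTo (inord p)) main p ext a)
         (Cfg (resume q' (inord target) rI) main target ext a)
         ((p - target) + (target - p)).+1 0.
Proof.
move=> Eq hp target; have ht : target < M := mv_lt m (ltn_ord hI).
suff loop n : forall p, p < M -> (p - target) + (target - p) = n ->
  reachS (Cfg (q, hI, rI, HeadTo (inord p)) main p ext a)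
         (Cfg (resume q' (inord target) rI) main target ext a) n.+1 0 by exact: loop.
elim: n => [|n IH] {}p {}hp hd.
  have ep : p = target by lia.
  apply: reach_ctrl; [exact: ctrl_nacc | by [] | by rewrite /= inordK // Eq -/target ep eqxx |].
  by rewrite ep; apply: reach0.
case: (ltngtP p target) => hpt; last lia.
- apply: reach_ctrl; [exact: ctrl_nacc | by [] |
    by rewrite /= inordK // Eq -/target (ltn_eqF hpt) hpt |].
  rewrite /= ifT; last lia.
  by apply: IH; lia.
- apply: reach_ctrl; [exact: ctrl_nacc | by [] |
    by rewrite /= inordK // Eq -/target (gtn_eqF hpt) ltnNge ltnW |].
  by apply: IH; lia.
Qed.

Lemma inord0 : inord 0 = ord0 :> 'I_M.
Proof. by apply: val_inj; rewrite /= inordK. Qed.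

Lemma advance_step q (hI rI : 'I_M) k g z : k < B' -> B <= M ->
  sim_delta (q, hI, rI, Advance (inord k)) g z =
  ((q, hI, rI, Transfer (inord k.+1)), g, MoveR, AInc).
Proof. by move=> hk hB; rewrite /= inordK ?ltn_eqF //; lia. Qed.

Lemma advance_last q (hI rI : 'I_M) g z : B <= M ->
  sim_delta (q, hI, rI, Advance (inord B')) g z =
  ((q, hI, rI, AddrRestore (inord (B' - rI))), g, MoveS, AKeep).
Proof. by move=> hB; rewrite /= inordK ?eqxx //; lia. Qed.

Lemma transfer_read q (hI rI : 'I_M) main ext h0 a0 :
  tkind q = ReadSt -> h0 + B <= M ->
  reachS (Cfg (q, hI, rI, Transfer ord0) main h0 ext a0)
         (Cfg (q, hI, rI, AddrRestore (inord (B' - rI))) (copy_block ext main a0 h0 B)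
              (h0 + B') ext (a0 + B')) B B.
Proof.
move=> Hq hB; have hBM : B <= M by lia.
suff loop n k : k + n = B' ->
  reachS (Cfg (q, hI, rI, Transfer (inord k)) (copy_block ext main a0 h0 k) (h0 + k) ext (a0 + k))
         (Cfg (q, hI, rI, AddrRestore (inord (B' - rI))) (copy_block ext main a0 h0 B)
              (h0 + B') ext (a0 + B')) n.+1 n.+1.
  by have := loop B' 0 erefl; rewrite inord0 copy_block0 !addn0.
elim: n k => [|n IH] k hk;
  (apply: reach_read; [exact: ctrl_nacc | by rewrite /= Hq | by [] |];
   rewrite /cell_read /= -copy_blockS).
  rewrite addn0 in hk; subst k.
  by apply: reach_ctrl; [exact: ctrl_nacc | by [] | exact: advance_last | exact: reach0].
apply: reach_ctrl; [exact: ctrl_nacc | by [] | apply: advance_step; lia |].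
rewrite /= ifT; last lia.
by rewrite -!addnS; apply: IH; lia.
Qed.

Lemma transfer_write q (hI rI : 'I_M) main ext h0 a0 :
  tkind q = WriteSt -> h0 + B <= M ->
  reachS (Cfg (q, hI, rI, Transfer ord0) main h0 ext a0)
         (Cfg (q, hI, rI, AddrRestore (inord (B' - rI))) main (h0 + B')
              (copy_block main ext h0 a0 B) (a0 + B')) B B.
Proof.
move=> Hq hB; have hBM : B <= M by lia.
suff loop n k : k + n = B' ->
  reachS (Cfg (q, hI, rI, Transfer (inord k)) main (h0 + k) (copy_block main ext h0 a0 k) (a0 + k))
         (Cfg (q, hI, rI, AddrRestore (inord (B' - rI))) main (h0 + B')
              (copy_block main ext h0 a0 B) (a0 + B')) n.+1 n.+1.
  by have := loop B' 0 erefl; rewrite inord0 copy_block0 !addn0.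
elim: n k => [|n IH] k hk;
  (apply: reach_write; [exact: ctrl_nacc | by rewrite /= Hq | by [] |];
   rewrite /cell_write /= -copy_blockS).
  rewrite addn0 in hk; subst k.
  by apply: reach_ctrl; [exact: ctrl_nacc | by [] | exact: advance_last | exact: reach0].
apply: reach_ctrl; [exact: ctrl_nacc | by [] | apply: advance_step; lia |].
rewrite /= ifT; last lia.
by rewrite -!addnS; apply: IH; lia.
Qed.

Hypothesis B_dvd_M : B %| M.

Lemma B_le_M : B <= M.
Proof. exact: dvdn_leq. Qed.

Lemma mod_lt_M a : a %% B < M.
Proof. exact: leq_trans (ltn_pmod a (ltn0Sn B')) B_le_M. Qed.

Lemma block_end_le h : h < M -> h %/ B * B + B <= M.
Proof.
move: B_dvd_M => /dvdnP[k Hk] hM; rewrite -mulSnr Hk leq_mul2r.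
by rewrite ltn_divLR // -Hk hM orbT.
Qed.

Definition encode (c : config Q G) : config state G :=
  Cfg (resume (cst c) (inord (chd c)) (inord (caddr c %% B)))
      (cmain c) (chd c) (cext c) (caddr c).

Lemma residue_updE a o : residue_upd (a %% B) o (a == 0) = aupd a o %% B.
Proof.
case: o => //=.
- by rewrite -addn1 modnDml addn1.
- by case: a => [|a] //=; rewrite modnDml addSnnS modnDr.
- by rewrite -!muln2 modnMml.
Qed.

Lemma sim_normal q main h ext a q1 g m o :
  q != tqacc mach -> h < M -> tkind q = Normal ->
  tdelta q (main h) (a == 0) = (q1, g, m, o) ->
  reachS (encode (Cfg q main h ext a))
         (encode (Cfg q1 (fun x => if x == h then g else main x) (mv M h m) ext (aupd a o))) 1 0.
Proof.
move=> Hn hM Hk Hd; rewrite /encode /resume /= (negbTE Hn).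
apply: (reach_normal (mach := sim)); [exact: state_nacc | by [] | | exact: reach0].
by rewrite /= Hk [val (inord h)]inordK // inordK ?mod_lt_M // Hd residue_updE.
Qed.

Lemma seek_block q main h ext a :
  q != tqacc mach -> tkind q <> Normal -> h < M ->
  reachS (encode (Cfg q main h ext a))
         (Cfg (q, inord h, inord (a %% B), Transfer ord0) main (h %/ B * B) ext (a %/ B * B))
         (a %% B + h %% B).+3 0.
Proof.
move=> Hn Hk hM; rewrite /encode /resume /= (negbTE Hn).
have hIv : val (inord h : 'I_M) = h := inordK hM.
apply: reach_ctrl; [exact: state_nacc | by [] | by rewrite /=; case: (tkind q) Hk |].
have hh : (inord h : 'I_M) %% B <= h by rewrite hIv leq_mod.
have := reach_trans (addr_back q (inord h) (inord (a %% B)) main h ext (mod_lt_M a) (leq_mod a B))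
                    (head_back q (inord h) (inord (a %% B)) main ext (a - a %% B) (mod_lt_M _) hh).
have sub_mod x : x - x %% B = x %/ B * B by rewrite {1}(divn_eq x B) addnK.
by rewrite hIv !sub_mod addSn addnS.
Qed.

Lemma return_block q q' m main h ext a : tio q = (q', m) -> h < M ->
  exists2 t,
    reachS (Cfg (q, inord h, inord (a %% B), AddrRestore (inord (B' - a %% B)))
                main (h %/ B * B + B') ext (a %/ B * B + B'))
           (encode (Cfg q' main (mv M h m) ext a)) t 0 & t <= 3 * B.
Proof.
move=> Eq hM; have hIv : val (inord h : 'I_M) = h := inordK hM.
have hblk := block_end_le hM; have hB := B_le_M.
have ea := divn_eq a B; have eh := divn_eq h B.
have haB := ltn_pmod a (ltn0Sn B'); have hhB := ltn_pmod h (ltn0Sn B').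
have hp : h %/ B * B + B' < M by lia.
have Raddr := @addr_restore q (inord h) (inord (a %% B)) (B' - a %% B) main
                (h %/ B * B + B') ext (a %/ B * B + B') ltac:(lia) ltac:(lia).
have Rhead := head_to (inord h) (inord (a %% B)) main ext a Eq hp.
rewrite hIv in Raddr Rhead.
rewrite (_ : a %/ B * B + B' - (B' - a %% B) = a) in Raddr; last lia.
have := mv_near M h m.
by eexists; first exact: reach_trans Raddr Rhead; lia.
Qed.

Lemma sim_block_io q q' m main h ext a main' ext' :
  q != tqacc mach -> tkind q <> Normal -> tio q = (q', m) -> h < M ->
  reachS (Cfg (q, inord h, inord (a %% B), Transfer ord0) main (h %/ B * B) ext (a %/ B * B))
         (Cfg (q, inord h, inord (a %% B), AddrRestore (inord (B' - (inord (a %% B) : 'I_M))))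
              main' (h %/ B * B + B') ext' (a %/ B * B + B')) B B ->
  exists2 t, reachS (encode (Cfg q main h ext a)) (encode (Cfg q' main' (mv M h m) ext' a)) t B
           & t <= 7 * B.
Proof.
move=> Hn Hk Eq hM; rewrite inordK ?mod_lt_M // => Rx.
have [t R Ht] := return_block main' ext' a Eq hM.
have := reach_trans (seek_block main ext a Hn Hk hM) (reach_trans Rx R).
rewrite addn0 add0n => Rall; eexists; first exact: Rall.
have := ltn_pmod a (ltn0Sn B'); have := ltn_pmod h (ltn0Sn B'); lia.
Qed.

Local Notation stepB := (gstep M (@block_read _ mach B) (@block_write _ mach B)).

Lemma sim_step c c1 t i : chd c < M -> cst c != tqacc mach -> stepB c = (c1, t, i) ->
  exists t' i', reachS (encode c) (encode c1) t' i' /\ t' <= t + 7 * B * i /\ i' <= 7 * B * i.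
Proof.
case: c => q main h ext a /= hM Hn; rewrite /gstep /=.
have hblk := block_end_le hM.
case Hk: (tkind q).
- case Hd: (tdelta q (main h) (a == 0)) => [[[q1 g] m] o] [<- <- <-].
  by exists 1, 0; split; [exact: sim_normal | lia].
all: have HkN : tkind q <> Normal by rewrite Hk.
all: case Eq: (tio q) => [q' m] [<- <- <-].
- have Rx := @transfer_read q (inord h) (inord (a %% B)) main ext
              (h %/ B * B) (a %/ B * B) Hk hblk.
  have [t' R Ht] := sim_block_io Hn HkN Eq hM Rx.
  by exists t', B; split; [exact: R | lia].
- have Rx := @transfer_write q (inord h) (inord (a %% B)) main ext
              (h %/ B * B) (a %/ B * B) Hk hblk.
  have [t' R Ht] := sim_block_io Hn HkN Eq hM Rx.
  by exists t', B; split; [exact: R | lia].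
Qed.

Lemma encode_acc c : (cst (encode c) == tqacc sim) = (cst c == tqacc mach).
Proof.
rewrite /encode /resume /=; case: (eqVneq (cst c) (tqacc mach)) => [->|Hn].
  by rewrite !eqxx.
exact: negbTE (state_nacc _ _ _ Hn).
Qed.

Lemma encode_init w : encode (init mach w) = init sim w.
Proof. by rewrite /encode /= mod0n inord0. Qed.

Lemma sim_computes f T IO :
  TLMBT_computes M B mach f T IO ->
  TLM_computes M sim f (fun n => T n + B * IO n) (fun n => B * IO n).
Proof.
move=> [Hout [C [N Hcost]]].
have sim_run n w cf t i :
    grun M (@block_read _ mach B) (@block_write _ mach B) n (init mach w) = Some (cf, t, i) ->
    exists n' t' i', grun M (@cell_read _ sim) (@cell_write _ sim) n' (init sim w)
                       = Some (encode cf, t', i') /\ t' <= t + 7 * B * i /\ i' <= 7 * B * i.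
  rewrite -encode_init => Hr.
  exact: (run_sim (S := sim) (inv := fun c => chd c < M) (c := init mach w) encode_acc
            (@gstep_head_lt _ _ _ _ _) sim_step (ltn0Sn M') Hr).
split=> [w | ].
  have [n [cf [t [i [/sim_run [n' [t' [i' [Hr _]]]] Ho]]]]] := Hout w.
  by exists n', (encode cf), t', i'.
exists (7 * C), N => w hw.
have [n [cf [t [i [/sim_run [n' [t' [i' [Hr [Ht' Hi']]]]] [Ht Hi]]]]]] := Hcost w hw.
by exists n', (encode cf), t', i'; split => //; nia.
Qed.

End BlockSimulator.

Theorem theorem3 (Sigma : finType) (M B : nat) (T IO : nat -> nat)
  (f : seq Sigma -> seq Sigma) :
  0 < M -> 0 < B -> B %| M ->
  (exists mach : TLM Sigma, TLMBT_computes M B mach f T IO) ->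
  exists mach' : TLM Sigma,
    TLM_computes M mach' f (fun n => T n + B * IO n) (fun n => B * IO n).
Proof.
case: M => [//|M'] _; case: B => [//|B'] _ B_dvd_M [mach Hmach].
by exists (sim mach M' B'); apply: sim_computes.
Qed.
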